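(* There are at least $2^{\aleph_0}$ many continuous injective maps $M(\mathbb R(x))\to M(\mathbb R(x,y))$, all of them compatible with restriction and having mutually disjoint images.
   Context: $\mathbb R(x,y)$ is the rational function field in two variables over $\mathbb R$. For a field $K$, $M(K)$ is the set of $\mathbb R$-places $K\to\mathbb R\cup\{\infty\}$, with topology generated by the subbasis $H'(b)=\{\zeta\in M(K)\mid \infty\ne\zeta(b)>0\}$, $b\in K$. A map $\iota:M(\mathbb R(x))\to M(\mathbb R(x,y))$ is compatible with restriction if $\iota(\zeta)|_{\mathbb R(x)}=\zeta$ for all $\zeta$. *)

From HB Require Import structures.
From mathcomp Require Import all_boot all_order all_algebra.
From mathcomp Require Import fraction Rstruct.
From Stdlib Require Import Reals.

Set Implicit Arguments.
Unset Strict Implicit.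
Unset Printing Implicit Defensive.
Import Order.TTheory GRing.Theory Num.Theory.
Local Open Scope ring_scope.

Definition Rx : fieldType := {fraction {poly R}}.
(* R(x,y) realised as R(x)(y) = Frac(R(x)[y]). *)
Definition Rxy : fieldType := {fraction {poly Rx}}.

Definition emb_xy (f : Rx) : Rxy := tofrac (f%:P).

(* An R-place K -> R ∪ {∞}; [None] stands for ∞.
   O := { a | z a <> ∞ } is a subring, z restricted to O is a ring morphism,
   and for a <> 0 : z a = ∞ iff z (a^-1) = 0 (valuation ring + kernel = max ideal). *)
Definition is_Rplace (K : fieldType) (z : K -> option R) : Prop :=
  z 1 = Some 1 /\
  (forall (a b : K) (u v : R), z a = Some u -> z b = Some v ->
       z (a + b) = Some (u + v) /\ z (a * b) = Some (u * v)) /\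
  (forall a : K, a != 0 -> (z a = None <-> z a^-1 = Some 0)).

Definition M (K : fieldType) := {z : K -> option R | is_Rplace z}.

Definition H' (K : fieldType) (b : K) (z : M K) : Prop :=
  exists r : R, proj1_sig z b = Some r /\ 0 < r.

(* Open sets of the topology generated by the subbasis {H'(b) | b in K}:
   every point of U lies in a finite intersection of subbasic sets inside U. *)
Definition M_open (K : fieldType) (U : M K -> Prop) : Prop :=
  forall z, U z -> exists s : seq K,
    (forall b, b \in s -> H' b z) /\
    (forall z', (forall b, b \in s -> H' b z') -> U z').

Definition M_continuous (K L : fieldType) (f : M K -> M L) : Prop :=
  forall U : M L -> Prop, M_open U -> M_open (fun z => U (f z)).

Definition compatible_restr (iota : M Rx -> M Rxy) : Prop :=
  forall z : M Rx, (fun f : Rx => proj1_sig (iota z) (emb_xy f)) = proj1_sig z.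

(* An R-place [z] of R(x) composed with the R(x)-place "evaluate at y = c" of
   R(x,y) (for a real constant [c]) is an R-place of R(x,y) restricting to [z];
   on the subbasic sets this composition is a pullback, hence continuous.  For
   [c <> c'] the images are disjoint: the first place sends [y - c] to [0], the
   second to [z'(c' - c)], which is finite and nonzero because an R-place of R(x)
   cannot send a nonzero real constant to [0] or [∞] (it would then send a real
   square to [-1]).  Continuum many constants come from the injection of
   [nat -> bool] into the reals by ternary expansions. *)

From HB Require Import structures.
From mathcomp Require Import all_boot all_order all_algebra.
From mathcomp Require Import fraction Rstruct.
From Stdlib Require Import Reals.
From mathcomp Require Import generic_quotient ring lra classical_sets reals.
From Stdlib Require Import ClassicalEpsilon ProofIrrelevance FunctionalExtensionality.

Set Implicit Arguments.
Unset Strict Implicit.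
Unset Printing Implicit Defensive.
Import Order.TTheory GRing.Theory Num.Theory.
Local Open Scope ring_scope.
Local Notation "x %:F" := (tofrac x).

(* [is_Rplace] is [is_place] at [L := R] up to conversion; the general form is
   needed for the evaluation places [K(y) -> K ∪ {∞}]. *)
Definition is_place (K L : fieldType) (z : K -> option L) : Prop :=
  z 1 = Some 1 /\
  (forall (a b : K) (u v : L), z a = Some u -> z b = Some v ->
       z (a + b) = Some (u + v) /\ z (a * b) = Some (u * v)) /\
  (forall a : K, a != 0 -> (z a = None <-> z a^-1 = Some 0)).

Section Place.
Variables (K L : fieldType) (z : K -> option L).
Hypothesis hz : is_place z.

Lemma place1 : z 1 = Some 1. Proof. by case: hz. Qed.

Lemma placeD a b u v : z a = Some u -> z b = Some v -> z (a + b) = Some (u + v).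
Proof. by case: hz => _ [hzDM _] /hzDM h /h []. Qed.

Lemma placeM a b u v : z a = Some u -> z b = Some v -> z (a * b) = Some (u * v).
Proof. by case: hz => _ [hzDM _] /hzDM h /h []. Qed.

Lemma place_pole a : a != 0 -> (z a = None <-> z a^-1 = Some 0).
Proof. by case: hz => _ [_]; apply. Qed.

Lemma placeN1 : z (-1) = Some (-1).
Proof.
have [v zN1] : exists v, z (-1) = Some v.
  case E: (z (-1)) => [v|]; first by exists v.
  have N10 : (-1 : K) != 0 by rewrite oppr_eq0 oner_eq0.
  by have /(place_pole N10) := E; rewrite invrN1 E.
have z0 := placeD place1 zN1; rewrite addrN in z0.
have := placeD z0 z0; rewrite addr0 z0 => -[v1].
have : (1 + v) + (1 + v) - (1 + v) = 0 by rewrite -v1 subrr.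
by rewrite addrK addrC => /eqP; rewrite addr_eq0 zN1 => /eqP ->.
Qed.

Lemma place0 : z 0 = Some 0.
Proof. by have := placeD place1 placeN1; rewrite !addrN. Qed.

Lemma place_nat n : z n%:R = Some n%:R.
Proof. by elim: n => [|n IH]; rewrite ?place0 // -addn1 !natrD (placeD IH place1). Qed.

Lemma placeV a u : z a = Some u -> u != 0 -> z a^-1 = Some u^-1.
Proof.
move=> zau u0; have a0 : a != 0 by apply: contra_neq u0 => a0; move: zau; rewrite a0 place0 => -[].
case E: (z a^-1) => [v|]; last first.
  have /(place_pole (invr_neq0 a0)) := E; rewrite invrK zau => -[u0'].
  by rewrite u0' eqxx in u0.
have := placeM zau E; rewrite mulfV // place1 => -[uv].
by rewrite -(mulKf u0 v) -uv mulr1.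
Qed.

Lemma place_zero_inv a : a != 0 -> z a = Some 0 -> z a^-1 = None.
Proof. by move=> a0; rewrite -{1}[a]invrK -place_pole ?invr_eq0. Qed.

End Place.

Lemma place_comp (K L E : fieldType) (w : L -> option K) (z : K -> option E) :
  is_place w -> is_place z -> is_place (fun a => obind z (w a)).
Proof.
move=> hw hz; split; first by rewrite (place1 hw) /= (place1 hz).
split.
  move=> a b u v; case wa: (w a) => [g|] //= zg; case wb: (w b) => [h|] //= zh.
  by rewrite (placeD hw wa wb) (placeM hw wa wb) /= (placeD hz zg zh) (placeM hz zg zh).
move=> a a0; case wa: (w a) => [g|] /=; last by rewrite ((place_pole hw a0).1 wa) /= (place0 hz).
move: wa; have [-> | g0] := eqVneq g 0 => wa.
  by rewrite (place_zero_inv hw a0 wa) (place0 hz).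
by rewrite (placeV hw wa g0) /=; apply: place_pole.
Qed.

Lemma fraction_div_tofrac (D : idomainType) (x : {fraction D}) :
  exists p q, q != 0 /\ x = p%:F / q%:F.
Proof.
elim/quotW: x => r; exists \n_r, \d_r; split; first exact: denom_ratioP.
rewrite /tofrac; unlock FracField.tofrac.
rewrite -[_^-1]FracField.pi_inv -[_ * _]FracField.pi_mul.
apply/eqmodP; rewrite /= FracField.equivfE /FracField.mulf /FracField.invf.
by rewrite !numden_Ratio ?mul1r ?mulr1 ?denom_ratioP ?oner_neq0 // mulrC.
Qed.

Lemma tofrac_divMr (D : idomainType) (a b h : D) :
  h != 0 -> (a * h)%:F / (b * h)%:F = a%:F / b%:F.
Proof. by move=> h0; rewrite !tofracM -mulf_div divff ?mulr1 ?tofrac_eq0. Qed.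

Section FracEval.
Variables (F : fieldType) (c : F).
Local Notation Fy := {fraction {poly F}}.

Definition has_value (x : Fy) (v : F) := exists p q : {poly F},
  q.[c] != 0 /\ x = p%:F / q%:F /\ v = p.[c] / q.[c].

Lemma tofrac_neq0_at (q : {poly F}) : q.[c] != 0 -> q%:F != 0 :> Fy.
Proof. by rewrite tofrac_eq0; apply: contraNneq => ->; rewrite horner0. Qed.

Lemma has_value_uniq x v w : has_value x v -> has_value x w -> v = w.
Proof.
move=> [p [q [qc [-> ->]]]] [p' [q' [q'c [E ->]]]].
move/eqP: E; rewrite eqr_div ?tofrac_neq0_at // -!tofracM tofrac_eq => /eqP E.
by apply/eqP; rewrite eqr_div //; have := congr1 (horner^~ c) E; rewrite !hornerM => ->.
Qed.

Lemma has_value_tofrac p : has_value p%:F p.[c].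
Proof.
by exists p, 1; rewrite hornerC oner_eq0 tofrac1 !divr1.
Qed.

Lemma has_valueD x y v w : has_value x v -> has_value y w -> has_value (x + y) (v + w).
Proof.
move=> [p [q [qc [-> ->]]]] [p' [q' [q'c [-> ->]]]].
exists (p * q' + p' * q), (q * q'); rewrite hornerM mulf_neq0 //.
by rewrite tofracD !tofracM addf_div ?tofrac_neq0_at // hornerD !hornerM addf_div.
Qed.

Lemma has_valueM x y v w : has_value x v -> has_value y w -> has_value (x * y) (v * w).
Proof.
move=> [p [q [qc [-> ->]]]] [p' [q' [q'c [-> ->]]]].
exists (p * p'), (q * q'); rewrite hornerM mulf_neq0 //.
by rewrite !tofracM !hornerM !mulf_div.
Qed.

Lemma has_valueV x v : has_value x v -> v != 0 -> has_value x^-1 v^-1.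
Proof.
move=> [p [q [qc [-> ->]]]] v0.
have pc : p.[c] != 0 by apply: contraNneq v0 => ->; rewrite mul0r.
by exists q, p; rewrite !invf_div.
Qed.

Lemma has_value0_inv x w : x != 0 -> has_value x 0 -> ~ has_value x^-1 w.
Proof.
move=> x0 x_0 xV_w; have := has_valueM x_0 xV_w; rewrite mul0r divff // -tofrac1.
by move=> /(has_value_uniq (has_value_tofrac 1)) /eqP; rewrite hornerC oner_eq0.
Qed.

Lemma has_value_pole x : x != 0 -> (forall v, ~ has_value x v) -> has_value x^-1 0.
Proof.
move=> x0 noval; have [p [q [q0 xE]]] := fraction_div_tofrac x.
have p0 : p != 0 by apply: contraNneq x0 => p0; rewrite xE p0 tofrac0 mul0r.
have [m [p1 p1c pE]] := multiplicity_XsubC p c; rewrite p0 /= in p1c.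
have [k [q1 q1c qE]] := multiplicity_XsubC q c; rewrite q0 /= in q1c.
pose Y := 'X - c%:P; rewrite -/Y in pE qE.
have Yn0 (n : nat) : Y ^+ n != 0 by rewrite expf_neq0 ?polyXsubC_eq0.
case: (leqP k m) => [km | mk].
  have xE' : x = (p1 * Y ^+ (m - k))%:F / q1%:F.
    by rewrite xE pE qE -{1}(subnK km) exprD mulrA tofrac_divMr.
  by case: (noval ((p1 * Y ^+ (m - k)).[c] / q1.[c])); exists (p1 * Y ^+ (m - k)), q1.
exists (q1 * Y ^+ (k - m)), p1; split; first exact: p1c.
split; first by rewrite xE pE qE invf_div -{1}(subnK (ltnW mk)) exprD mulrA tofrac_divMr.
by rewrite hornerM horner_exp hornerXsubC subrr expr0n subn_eq0 leqNgt mk mulr0 mul0r.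
Qed.

Definition frac_eval (x : Fy) : option F :=
  match excluded_middle_informative (exists v, has_value x v) with
  | left H => Some (proj1_sig (constructive_indefinite_description _ H))
  | right _ => None
  end.

Lemma frac_evalP x v : frac_eval x = Some v <-> has_value x v.
Proof.
rewrite /frac_eval; case: excluded_middle_informative => [xv | noval]; last first.
  by split=> // xv; case: noval; exists v.
case: constructive_indefinite_description => w /= xw.
by split=> [[<-] // | /(has_value_uniq xw) ->].
Qed.

Lemma frac_evalPn x : frac_eval x = None <-> forall v, ~ has_value x v.
Proof.
rewrite /frac_eval; case: excluded_middle_informative => [[w xw] | noval].
  by split=> // /(_ w).
by split=> // _ v xv; apply: noval; exists v.
Qed.

Lemma frac_eval_tofrac p : frac_eval p%:F = Some p.[c].
Proof. exact/frac_evalP/has_value_tofrac. Qed.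

Lemma frac_eval_place : is_place frac_eval.
Proof.
split; first by rewrite -tofrac1 frac_eval_tofrac hornerC.
split.
  move=> a b u v /frac_evalP au /frac_evalP bv.
  by split; apply/frac_evalP; [apply: has_valueD | apply: has_valueM].
move=> a a0; split=> [/frac_evalPn | /frac_evalP aV0].
  by move=> /(has_value_pole a0) /frac_evalP.
apply/frac_evalPn => v av.
have [v0 | v0] := eqVneq v 0; first by rewrite v0 in av; exact: has_value0_inv a0 av aV0.
by have := has_value_uniq aV0 (has_valueV av v0) => /esym/eqP; rewrite invr_eq0 (negPf v0).
Qed.

End FracEval.

Lemma place_sqr_ge0 (K : fieldType) (L : realFieldType) (z : K -> option L) (w : K) (r : L) :
  is_place z -> z (w * w) = Some r -> 0 <= r.
Proof.
move=> hz; case zw: (z w) => [a|].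
  by rewrite (placeM hz zw zw) => -[<-]; rewrite -expr2 sqr_ge0.
have w0 : w != 0 by apply: contra_eq_neq zw => ->; rewrite (place0 hz).
have ww0 : w * w != 0 by rewrite mulf_neq0.
have zwV := (place_pole hz w0).1 zw.
by have := placeM hz zwV zwV; rewrite mulr0 -invfM => /(place_pole hz ww0).2 ->.
Qed.

Definition cst : {rmorphism R -> Rx} := @tofrac _ \o polyC.

(* If [z (cst s)] were infinite, [z] would send the real square [n / s^2 - 1],
   with [n >= s^2], to [-1]. *)
Lemma Rplace_cst_finite (z : Rx -> option R) (s : R) : is_place z -> z (cst s) <> None.
Proof.
move=> hz zs; have s0 : s != 0 by apply: contra_eq_neq zs => ->; rewrite rmorph0 (place0 hz).
have zsV : z (cst s^-1) = Some 0.
  by rewrite fmorphV; apply/(place_pole hz); rewrite ?fmorph_eq0.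
set n := Num.bound (s * s).
have n_ge : 1 <= n%:R * (s^-1 * s^-1).
  have ss : 0 < s * s by rewrite lt_def mulf_neq0 //= -expr2 sqr_ge0.
  by rewrite -invfM ler_pdivlMr // mul1r ltW // archi_boundP // ltW.
pose g := Num.sqrt (n%:R * (s^-1 * s^-1) - 1).
have gg : cst g * cst g = n%:R * (cst s^-1 * cst s^-1) - 1.
  by rewrite -rmorphM -expr2 sqr_sqrtr ?subr_ge0 // rmorphB !rmorphM rmorph_nat rmorph1.
have zgg : z (cst g * cst g) = Some (n%:R * (0 * 0) - 1).
  by rewrite gg (placeD hz (placeM hz (place_nat hz n) (placeM hz zsV zsV)) (placeN1 hz)).
by have := place_sqr_ge0 hz zgg; rewrite !mulr0 add0r oppr_ge0 ler10.
Qed.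

Lemma Rplace_cst_neq0 (z : Rx -> option R) (d : R) : is_place z -> d != 0 -> z (cst d) <> Some 0.
Proof.
move=> hz d0 zd; have dV0 : cst d^-1 != 0 by rewrite fmorph_eq0 invr_eq0.
apply: (@Rplace_cst_finite z d^-1 hz); apply/(place_pole hz dV0).
by rewrite fmorphV invrK.
Qed.

Section Pullback.
Variables (K L : fieldType) (w : L -> option K).
Hypothesis hw : is_place w.

Definition pullback (z : M K) : M L :=
  exist _ (fun a => obind (sval z) (w a)) (place_comp hw (svalP z)).

Lemma H'_pullback b z : H' b (pullback z) <-> exists2 g, w b = Some g & H' g z.
Proof.
rewrite /H' /=; case: (w b) => [g|] /=; last by split=> [[r []]|[]].
by split=> [zg | [_ [<-]]]; first exists g.
Qed.

Lemma pullback_continuous : M_continuous pullback.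
Proof.
move=> U Uopen z /Uopen [s [zs sU]].
have zsw b : b \in s -> exists2 g, w b = Some g & H' g z by move=> /zs /H'_pullback.
exists [seq odflt 0 (w b) | b <- s]; split.
  by move=> _ /mapP [b /zsw [g -> zg] ->].
move=> z' z's; apply: sU => b bs; apply/H'_pullback.
have [g wb _] := zsw b bs; exists g => //.
by apply: z's; apply/mapP; exists b; rewrite ?wb.
Qed.

Variable sec : K -> L.
Hypothesis w_sec : forall f, w (sec f) = Some f.

Lemma pullback_restr z : (fun f => sval (pullback z) (sec f)) = sval z.
Proof. by apply: functional_extensionality => f; rewrite /= w_sec. Qed.

Lemma pullback_inj : injective pullback.
Proof.
move=> z z' /(congr1 (fun y => fun f => sval y (sec f))).
rewrite !pullback_restr => zz'; apply: eq_sig_hprop zz' => ? ? ?.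
exact: proof_irrelevance.
Qed.

End Pullback.

Definition yeval_map (c : R) : M Rx -> M Rxy := pullback (frac_eval_place (cst c)).

Lemma frac_eval_emb_xy c f : frac_eval (cst c) (emb_xy f) = Some f.
Proof. by rewrite frac_eval_tofrac hornerC. Qed.

Lemma yeval_map_compatible c : compatible_restr (yeval_map c).
Proof. exact: pullback_restr (frac_eval_emb_xy c). Qed.

Lemma yeval_map_inj c : injective (yeval_map c).
Proof. exact: pullback_inj (frac_eval_emb_xy c). Qed.

Lemma yeval_map_disjoint c c' z z' : c != c' -> yeval_map c z <> yeval_map c' z'.
Proof.
move=> cc' /(congr1 (fun y => sval y ('X - (cst c)%:P)%:F)) /=.
rewrite !frac_eval_tofrac !hornerXsubC subrr -(rmorphB cst) /= (place0 (svalP z)) => /esym.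
by apply: (@Rplace_cst_neq0 (sval z') (c' - c) (svalP z')); rewrite subr_eq0 eq_sym.
Qed.

Section CantorReal.
Variable RR : realType.

Local Notation third := (3%:R^-1 : RR).

Definition ternary_sum (t : nat -> bool) (n : nat) : RR :=
  \sum_(i < n) (t i)%:R * third ^+ i.+1.

Definition cantor_real (t : nat -> bool) : RR := sup (range (ternary_sum t)).

Lemma third_gt0 : 0 < third. Proof. by rewrite invr_gt0 ltr0n. Qed.

Lemma ternary_sumS t n : ternary_sum t n.+1 = ternary_sum t n + (t n)%:R * third ^+ n.+1.
Proof. by rewrite /ternary_sum big_ord_recr. Qed.

Lemma ternary_sum_le t m d : ternary_sum t m <= ternary_sum t (m + d).
Proof.
elim: d => [|d IH]; first by rewrite addn0.
rewrite addnS ternary_sumS (le_trans IH) // lerDl mulr_ge0 ?ler0n //.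
by rewrite exprn_ge0 // ltW // third_gt0.
Qed.

Lemma ternary_sum_tail t m d :
  ternary_sum t (m + d) <= ternary_sum t m + (third ^+ m - third ^+ (m + d)) / 2%:R.
Proof.
elim: d => [|d IH]; first by rewrite addn0 subrr mul0r addr0.
rewrite addnS ternary_sumS.
have digit : (t (m + d))%:R * third ^+ (m + d).+1 <= third ^+ (m + d).+1.
  apply: ler_piMl; first by rewrite exprn_ge0 // ltW // third_gt0.
  by case: (t _); rewrite ?ler01 ?lexx.
have geom : third ^+ (m + d).+1 = (third ^+ (m + d) - third ^+ (m + d).+1) / 2%:R.
  by rewrite exprS; field.
lra.
Qed.

Lemma ternary_sum_ub t m n : ternary_sum t n <= ternary_sum t m + third ^+ m / 2%:R.
Proof.
have tail0 : 0 <= third ^+ m / 2%:R by rewrite divr_ge0 ?exprn_ge0 ?ler0n // ltW // third_gt0.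
case: (leqP n m) => nm.
  by have := ternary_sum_le t n (m - n); rewrite subnKC //; lra.
have := ternary_sum_tail t m (n - m); rewrite subnKC ?(ltnW nm) //.
have : 0 <= third ^+ n by rewrite exprn_ge0 // ltW // third_gt0.
lra.
Qed.

Lemma has_sup_ternary_sum t : has_sup (range (ternary_sum t)).
Proof.
split; first by exists (ternary_sum t 0), 0%N.
by exists (ternary_sum t 0 + third ^+ 0 / 2%:R) => _ [n _ <-]; apply: ternary_sum_ub.
Qed.

(* A tail of the expansion weighs at most half the digit before it, so the first
   differing digit decides the order. *)
Lemma cantor_real_lt (t t' : nat -> bool) (k : nat) :
  (forall i : nat, (i < k)%nat -> t i = t' i) -> t k = true -> t' k = false ->
  cantor_real t' < cantor_real t.
Proof.
move=> tt' tk t'k.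
have same : ternary_sum t k = ternary_sum t' k by apply: eq_bigr => i _; rewrite tt'.
have lb : ternary_sum t k.+1 <= cantor_real t.
  by apply: sup_upper_bound (has_sup_ternary_sum t) _ _; exists k.+1.
have ub : cantor_real t' <= ternary_sum t' k.+1 + third ^+ k.+1 / 2%:R.
  by apply: ge_sup; [exists (ternary_sum t' 0), 0%N | move=> _ [n _ <-]; apply: ternary_sum_ub].
rewrite ternary_sumS t'k mul0r addr0 -same in ub.
rewrite ternary_sumS tk mul1r in lb.
have : 0 < third ^+ k.+1 by rewrite exprn_gt0 // third_gt0.
lra.
Qed.

Lemma cantor_real_inj : injective cantor_real.
Proof.
move=> t t' tt'; apply: functional_extensionality => i; apply/eqP/contraT => ti.
have [k /eqP tk kmin] := ex_minnP (ex_intro (fun k => t k != t' k) i ti).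
have below (j : nat) : (j < k)%nat -> t j = t' j.
  by move=> jk; apply/eqP; apply: contraTT jk => /kmin; rewrite -leqNgt.
move: tk; case tk: (t k); case t'k: (t' k) => // _.
- by have := cantor_real_lt below tk t'k; rewrite tt' ltxx.
- by have := cantor_real_lt (fun j jk => esym (below j jk)) t'k tk; rewrite tt' ltxx.
Qed.

End CantorReal.

Theorem corollary9p3 :
  exists F : (nat -> bool) -> (M Rx -> M Rxy),
    (forall t, M_continuous (F t) /\ injective (F t) /\ compatible_restr (F t)) /\
    (forall t t', t <> t' -> forall z z' : M Rx, F t z <> F t' z').
Proof.
exists (fun t => yeval_map (cantor_real R t)); split.
  move=> t; split; first exact: pullback_continuous.
  by split; [apply: yeval_map_inj | apply: yeval_map_compatible].
move=> t t' tt' z z'; apply: yeval_map_disjoint.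
by apply/eqP => /cantor_real_inj.
Qed.
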